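(* Let $X$ be a Sturmian word and let $P$ be a palindrome that is maximal in $X$. Then $P$ also has a non-maximal occurrence in $X$ which is a proper factor of a same-centric maximal palindrome: there are positions $i'<i\le j<j'$ with $i'\ge 2$, $i+j=i'+j'$, $X[i..j]=P$, $X[i-1]=X[j+1]$, $X[i'..j']$ a palindrome, and $X[i'-1]\neq X[j'+1]$.
   Context: A Sturmian word is a right-infinite aperiodic word over $\{a,b\}$ with exactly $n+1$ factors of each length $n$. $X[i..j]$ denotes the factor of $X$ from position $i$ to position $j$. A palindrome is a word equal to its reverse. A palindrome $P$ is maximal in $X$ if $lPl'$ is a factor of $X$ for some letters $l\neq l'$. *)

(* Infinite words over {a,b} are modelled as X : nat -> bool
   (a = false, b = true), with positions indexed from 0. *)
From mathcomp Require Import all_boot.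
Set Implicit Arguments. Unset Strict Implicit. Unset Printing Implicit Defensive.

Definition word := nat -> bool.

Definition subw (X : word) (i j : nat) : seq bool :=
  [seq X k | k <- iota i (j.+1 - i)].

Definition is_factor (X : word) (w : seq bool) : Prop :=
  exists k, w = [seq X (k + m) | m <- iota 0 (size w)].

Definition complexity_eq (X : word) (n c : nat) : Prop :=
  exists s : seq (seq bool), uniq s /\ size s = c /\
    forall w, w \in s <-> (size w = n /\ is_factor X w).

Definition aperiodic (X : word) : Prop :=
  ~ exists p N, 0 < p /\ forall k, N <= k -> X (k + p) = X k.

Definition sturmian (X : word) : Prop :=
  aperiodic X /\ forall n, complexity_eq X n n.+1.

Definition palindrome (w : seq bool) : Prop := w = rev w.

Definition maximal_pal (X : word) (P : seq bool) : Prop :=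
  exists l l' : bool, l != l' /\ is_factor X (l :: rcons P l').

From mathcomp Require Import all_boot zify.
From Stdlib Require Import Classical ClassicalEpsilon.
Set Implicit Arguments. Unset Strict Implicit. Unset Printing Implicit Defensive.

(* A Sturmian word has exactly one right special factor of each length, all its
   factors recur, and (through the balance property) its language is closed under
   reversal.  Hence a maximal palindrome P is right special, some c P c is a factor,
   and P has two distinct occurrences with equal neighbours.  If no such occurrence
   lay strictly inside a maximal palindrome with the same centre, the palindrome
   around each of them would extend back to position 0; reflecting one occurrence
   through the palindromic prefix of the other yields occurrences in arithmetic
   progression, whose palindromic prefixes make the word periodic. *)

Definition asbool (P : Prop) : bool := if excluded_middle_informative P then true else false.

Lemma asboolP (P : Prop) : reflect P (asbool P).
Proof. by rewrite /asbool; case: excluded_middle_informative => h; constructor. Qed.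

Lemma count_le1P (T : eqType) (p : pred T) (s : seq T) : uniq s ->
  reflect {in s &, forall a b, p a -> p b -> a = b} (count p s <= 1).
Proof.
move=> us; rewrite -size_filter; apply: (iffP idP) => [le1 a b sa sb pa pb | uniq_p].
  apply: contraTeq le1 => ab; rewrite -ltnNge.
  apply: (@uniq_leq_size _ [:: a; b]); first by rewrite /= inE ab.
  by move=> c; rewrite !inE mem_filter => /orP[] /eqP ->; apply/andP.
case e: (filter p s) => [|a r] //.
have fa : a \in filter p s by rewrite e mem_head.
rewrite -e; apply: (@uniq_leq_size _ _ [:: a]); first exact: filter_uniq.
move=> b; rewrite !mem_filter inE in fa * => /andP[pb sb]; case/andP: fa => pa sa.
by rewrite (uniq_p b a).
Qed.

Definition words (n : nat) : seq (seq bool) := map val (enum {: n.-tuple bool}).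

Lemma mem_words n v : (v \in words n) = (size v == n).
Proof.
apply/mapP/eqP => [[t _ ->] | sv]; first exact: size_tuple.
by exists (Tuple (introT eqP sv)); rewrite ?mem_enum.
Qed.

Lemma uniq_words n : uniq (words n).
Proof. by rewrite map_inj_uniq ?enum_uniq //; exact: val_inj. Qed.

Definition eventually_periodic (Y : word) : Prop :=
  exists p N, 0 < p /\ forall k, N <= k -> Y (k + p) = Y k.

Definition factor_at (X : word) (k n : nat) : seq bool := mkseq (fun m => X (k + m)) n.
Arguments factor_at : simpl never.

Section Factors.

Variable X : word.

Lemma size_factor_at k n : size (factor_at X k n) = n.
Proof. exact: size_mkseq. Qed.

Lemma nth_factor_at k n m : m < n -> nth false (factor_at X k n) m = X (k + m).
Proof. exact: nth_mkseq. Qed.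

Lemma is_factorP u : is_factor X u <-> exists k, u = factor_at X k (size u).
Proof. by []. Qed.

Lemma factor_at_is_factor k n : is_factor X (factor_at X k n).
Proof. by exists k; rewrite size_factor_at. Qed.

Lemma factor_atP a b n :
  reflect (forall m, m < n -> X (a + m) = X (b + m)) (factor_at X a n == factor_at X b n).
Proof.
apply: (iffP eqP) => [e m lt_mn | h].
  by rewrite -(nth_factor_at a lt_mn) -(nth_factor_at b lt_mn) e.
apply: (@eq_from_nth _ false); rewrite ?size_factor_at // => m lt_mn.
by rewrite !nth_factor_at // h.
Qed.

Lemma factor_atS k n : factor_at X k n.+1 = rcons (factor_at X k n) (X (k + n)).
Proof. by rewrite /factor_at /mkseq -addn1 iotaD map_cat cats1. Qed.

Lemma factor_atSl k n : factor_at X k n.+1 = X k :: factor_at X k.+1 n.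
Proof.
apply: (@eq_from_nth _ false) => [|[|m] lt_mn]; first by rewrite size_factor_at /= size_factor_at.
  by rewrite nth_factor_at ?addn0.
rewrite size_factor_at in lt_mn.
by rewrite nth_factor_at // [RHS]/= nth_factor_at // addSnnS.
Qed.

Lemma factor_atS2 k n :
  factor_at X k n.+2 = X k :: rcons (factor_at X k.+1 n) (X (k.+1 + n)).
Proof. by rewrite factor_atSl factor_atS. Qed.

Lemma is_factor_factor_atS k n : is_factor X (rcons (factor_at X k n) (X (k + n))).
Proof. by rewrite -factor_atS; apply: factor_at_is_factor. Qed.

Lemma factor_at_cat k n m : factor_at X k (n + m) = factor_at X k n ++ factor_at X (k + n) m.
Proof.
apply: (@eq_from_nth _ false) => [|i]; rewrite ?size_cat !size_factor_at // => lt_i.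
rewrite nth_cat size_factor_at nth_factor_at //.
by case: ltnP => i_n; rewrite nth_factor_at // -?addnA ?subnKC //; lia.
Qed.

Lemma is_factor_cat u v : is_factor X (u ++ v) -> is_factor X u /\ is_factor X v.
Proof.
case/is_factorP=> k; rewrite size_cat factor_at_cat => /eqP; rewrite eqseq_cat ?size_factor_at //.
by case/andP=> /eqP eu /eqP ev; split; [exists k | exists (k + size u)].
Qed.

Lemma is_factor_rcons u b : is_factor X (rcons u b) -> is_factor X u.
Proof. by rewrite -cats1 => /is_factor_cat[]. Qed.

Lemma is_factor_cons b u : is_factor X (b :: u) -> is_factor X u.
Proof. by rewrite -cat1s => /is_factor_cat[]. Qed.

Lemma factor_at_shift a b n :
  factor_at X a n = factor_at X b n -> X (a + n) = X (b + n) ->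
  factor_at X a.+1 n = factor_at X b.+1 n.
Proof.
move=> e e'; have := factor_atS a n; rewrite e e' -factor_atS !factor_atSl.
by case.
Qed.

End Factors.

Section Language.

Variable L : seq bool -> Prop.

Definition words_in n : seq (seq bool) := [seq v <- words n | asbool (L v)].

Definition right_special v : Prop := L (rcons v true) /\ L (rcons v false).

Lemma mem_words_in n v : v \in words_in n <-> size v = n /\ L v.
Proof.
rewrite mem_filter mem_words.
by split=> [/andP[/asboolP ? /eqP] // | [-> /asboolP ->]]; rewrite eqxx.
Qed.

Lemma uniq_words_in n : uniq (words_in n).
Proof. exact/filter_uniq/uniq_words. Qed.

Lemma size_words_in_ge n s :
  uniq s -> (forall v, v \in s -> size v = n /\ L v) -> size s <= size (words_in n).
Proof. by move=> us sL; apply: uniq_leq_size => // v /sL /mem_words_in. Qed.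

Lemma right_special_rcons v b : right_special v -> L (rcons v b).
Proof. by case: b => -[]. Qed.

Lemma right_specialI v b b' :
  b != b' -> L (rcons v b) -> L (rcons v b') -> right_special v.
Proof. by case: b; case: b'. Qed.

Definition count_right_special n : nat :=
  count (fun v => asbool (right_special v)) (words_in n).

Hypothesis L_prefix : forall v b, L (rcons v b) -> L v.

Lemma count_right_special_le1P n : reflect
  (forall u v, size u = n -> size v = n -> right_special u -> right_special v -> u = v)
  (count_right_special n <= 1).
Proof.
have mem_rs v : right_special v -> v \in words_in (size v).
  by case=> /L_prefix Lv _; apply/mem_words_in.
apply: (iffP (count_le1P _ (uniq_words_in n))) => uniq_rs.
  move=> u v su sv ru rv; apply: uniq_rs; try exact/asboolP.
    by rewrite -su; exact: mem_rs.
  by rewrite -sv; exact: mem_rs.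
by move=> u v /mem_words_in[su _] /mem_words_in[sv _] /asboolP ru /asboolP rv; apply: uniq_rs.
Qed.

Lemma size_words_inS_le n :
  size (words_in n.+1) <= size (words_in n) + count_right_special n.
Proof.
pose ext b := [seq v <- words_in n | asbool (L (rcons v b))].
have le_ext : size (words_in n.+1) <= size (ext true) + size (ext false).
  rewrite -(size_map (rcons^~ true) (ext true)) -(size_map (rcons^~ false) (ext false)).
  rewrite -size_cat; apply: uniq_leq_size; first exact: uniq_words_in.
  case/lastP => [|v b] /mem_words_in[//]; rewrite size_rcons => -[sv] Lvb.
  have wv : v \in words_in n by apply/mem_words_in; split=> //; exact: L_prefix Lvb.
  rewrite mem_cat; apply/orP; case: b Lvb => Lvb; [left | right];
    by apply: map_f; rewrite mem_filter wv andbT; apply/asboolP.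
apply: (leq_trans le_ext); rewrite !{1}[size (ext _)]size_filter -count_predUI.
apply: leq_add; first exact: count_size.
apply/eq_leq/eq_count => v /=.
by apply/andP/asboolP => -[L1 L0]; split; apply/asboolP.
Qed.

Hypothesis L_extend : forall v, L v -> exists b, L (rcons v b).

Lemma size_words_inS_ge n :
  size (words_in n) + count_right_special n <= size (words_in n.+1).
Proof.
pose ext v := asbool (L (rcons v true)).
have L_ext v : L v -> L (rcons v (ext v)).
  rewrite /ext; case: asboolP => // nLv1 /L_extend[[] //].
pose s := [seq rcons v (ext v) | v <- words_in n] ++
          [seq rcons v (~~ ext v) | v <- words_in n & asbool (right_special v)].
have -> : size (words_in n) + count_right_special n = size s.
  by rewrite size_cat !size_map size_filter.
apply: size_words_in_ge => [|w].
  rewrite cat_uniq !map_inj_in_uniq ?filter_uniq ?uniq_words //= ?andbT;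
    try by move=> v v' _ _ /rcons_inj[].
  apply/hasPn => _ /mapP[v _ ->]; apply/mapP => -[v' _ /rcons_inj[<-]].
  by case: (ext v).
rewrite mem_cat => /orP[] /mapP[v]; last rewrite mem_filter => /andP[/asboolP rv];
  move=> /mem_words_in[sv Lv] ->; rewrite size_rcons sv; split=> //.
  exact: L_ext.
exact: right_special_rcons.
Qed.

End Language.

Definition factors (X : word) (n : nat) : seq (seq bool) := words_in (is_factor X) n.

Lemma size_factorsS X n :
  size (factors X n.+1) = size (factors X n) + count_right_special (is_factor X) n.
Proof.
have extend v : is_factor X v -> exists b, is_factor X (rcons v b).
  by case/is_factorP=> k ->; exists (X (k + size v)); apply: is_factor_factor_atS.
by apply/eqP; rewrite eqn_leq size_words_inS_le ?size_words_inS_ge //; exact: is_factor_rcons.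
Qed.

Lemma sturmian_size_factors X n : sturmian X -> size (factors X n) = n.+1.
Proof.
case=> _ /(_ n) [s [us [<- mem_s]]]; apply/perm_size/uniq_perm => // [|v].
  exact: uniq_words_in.
by apply/idP/idP => [/mem_words_in h | /mem_s h]; [apply/mem_s | apply/mem_words_in].
Qed.

Lemma sturmian_count_right_special X n :
  sturmian X -> count_right_special (is_factor X) n = 1.
Proof. by move=> st; have := size_factorsS X n; rewrite !sturmian_size_factors //; lia. Qed.

Lemma sturmian_right_special_uniq X u v : sturmian X -> size u = size v ->
  right_special (is_factor X) u -> right_special (is_factor X) v -> u = v.
Proof.
move=> st suv; apply: (count_right_special_le1P (@is_factor_rcons X) (size u)) => //.
by rewrite sturmian_count_right_special.
Qed.

Lemma sturmian_right_special_exists X n :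
  sturmian X -> exists v, size v = n /\ right_special (is_factor X) v.
Proof.
move=> st; have : 0 < count_right_special (is_factor X) n by rewrite sturmian_count_right_special.
rewrite -has_count => /hasP[v /mem_words_in[sv _] /asboolP rv].
by exists v.
Qed.

Lemma count_right_special_eq0 L n : (forall v b, L (rcons v b) -> L v) ->
  count_right_special L n = 0 -> forall v, size v = n -> ~ right_special L v.
Proof.
move=> L_prefix c0 v sv rv; move/eqP: c0; apply/negP; rewrite -lt0n -has_count.
apply/hasP; exists v; last exact/asboolP.
by apply/mem_words_in; split=> //; case: rv => /L_prefix.
Qed.

Section DeterministicWindows.

Variables (Y : word) (j : nat).
Hypothesis next_det : forall a b, factor_at Y a j = factor_at Y b j -> Y (a + j) = Y (b + j).

Lemma factor_at_det_shift a b t :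
  factor_at Y a j = factor_at Y b j -> factor_at Y (a + t) j = factor_at Y (b + t) j.
Proof.
move=> e; elim: t => [|t IH]; first by rewrite !addn0.
by rewrite !addnS; apply: factor_at_shift IH (next_det IH).
Qed.

Lemma deterministic_eventually_periodic : eventually_periodic Y.
Proof.
pose s := [seq factor_at Y k j | k <- iota 0 (size (factors Y j)).+1].
have /(uniqPn [::]) [i [i' [lt_ii' lt_i's]]] : ~~ uniq s.
  apply: contraT => /negPn us; have : size s <= size (factors Y j).
    apply: size_words_in_ge => // _ /mapP[k _ ->].
    by rewrite size_factor_at; split=> //; apply: factor_at_is_factor.
  by rewrite size_map size_iota ltnn.
rewrite size_map size_iota in lt_i's.
rewrite !(nth_map 0) ?size_iota ?(ltn_trans lt_ii') // !nth_iota ?(ltn_trans lt_ii') // !add0n.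
move=> e; exists (i' - i), (i + j); split; first by rewrite subn_gt0.
move=> k le_k; have := next_det (factor_at_det_shift (k - j - i) e).
have -> : i + (k - j - i) + j = k by lia.
by have -> : i' + (k - j - i) + j = k + (i' - i) by lia.
Qed.

End DeterministicWindows.

Lemma size_factors_gt Y m :
  (forall i, i < m -> 0 < count_right_special (is_factor Y) i) -> m < size (factors Y m).
Proof.
elim: m => [_ | m IH rs_gt0].
  have : [::] \in factors Y 0 by apply/mem_words_in; split=> //; exists 0.
  by case: (factors Y 0).
rewrite size_factorsS; have := rs_gt0 m (ltnSn m).
by have := IH (fun i lt_im => rs_gt0 i (ltnW lt_im)); lia.
Qed.

Lemma low_complexity_eventually_periodic Y m :
  size (factors Y m) <= m -> eventually_periodic Y.
Proof.
move=> le_m.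
have [j no_rs] : exists j, count_right_special (is_factor Y) j = 0.
  apply: NNPP => no_j; move: le_m; rewrite leqNgt size_factors_gt // => i _.
  by rewrite lt0n; apply/eqP => c0; apply: no_j; exists i.
apply: (@deterministic_eventually_periodic Y j) => a b e; apply: NNPP => ne.
apply: (count_right_special_eq0 (@is_factor_rcons Y) no_rs (size_factor_at Y a j)).
apply: (@right_specialI _ _ (Y (a + j)) (Y (b + j))); first exact/eqP.
  exact: is_factor_factor_atS.
by rewrite e; apply: is_factor_factor_atS.
Qed.

Lemma sturmian_recurrent X u N : sturmian X -> is_factor X u ->
  exists2 k, N <= k & factor_at X k (size u) = u.
Proof.
move=> st fu; apply: NNPP => no_occ; case: (st) => aper _; apply: aper.
pose Y k := X (N + k); set m := size u.
suff /low_complexity_eventually_periodic [p [M [p0 per]]] : size (factors Y m) <= m.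
  exists p, (N + M); split=> // k le_k; have := per (k - N) ltac:(lia).
  by rewrite /Y addnA subnKC //; lia.
have u_in : u \in factors X m by apply/mem_words_in.
suff : size (factors Y m) <= size (rem u (factors X m)).
  by rewrite size_rem // (sturmian_size_factors m st); exact: id.
apply: uniq_leq_size => [|v /mem_words_in[sv /is_factorP[k ev]]]; first exact: uniq_words_in.
have fYX : v = factor_at X (N + k) m.
  by rewrite ev sv; apply: (eq_mkseq _ m) => i; rewrite /Y addnA.
rewrite mem_rem_uniq ?uniq_words_in // inE; apply/andP; split.
  by apply: contra_notN no_occ => /eqP vu; exists (N + k); rewrite ?leq_addr // -vu {2}fYX sv.
by apply/mem_words_in; split=> //; rewrite fYX; apply: factor_at_is_factor.
Qed.

Lemma sturmian_one_sided_extension X w : sturmian X ->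
  is_factor X (true :: rcons w true) -> is_factor X (false :: rcons w false) ->
  exists x, ~ is_factor X (x :: rcons w (~~ x)).
Proof.
move=> st f11 f00; apply: NNPP => /= all4.
have ext x y : is_factor X (x :: rcons w y).
  by case: x y => -[] //; apply: NNPP => nf; apply: all4; [exists true | exists false].
suff : true :: w = false :: w by [].
by apply: (sturmian_right_special_uniq st) => //; split; apply: ext.
Qed.

Section ReturnTime.

Variables (X : word) (w : seq bool).
Hypotheses (st : sturmian X) (rs_w : right_special (is_factor X) w).
Local Notation n := (size w).

Lemma next_letter_det a b : factor_at X a n = factor_at X b n ->
  factor_at X a n != w -> X (a + n) = X (b + n).
Proof.
move=> e ne; apply: NNPP => nl; move/eqP: ne; apply.
apply: (sturmian_right_special_uniq st (size_factor_at X a n) _ rs_w).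
apply: (@right_specialI _ _ (X (a + n)) (X (b + n))); first exact/eqP.
  exact: is_factor_factor_atS.
by rewrite e; apply: is_factor_factor_atS.
Qed.

Lemma factor_at_agree_until a b K : factor_at X a n = factor_at X b n ->
  (forall k, k < K -> factor_at X (a + k) n != w) ->
  forall k, k <= K -> factor_at X (a + k) n = factor_at X (b + k) n.
Proof.
move=> e not_w; elim=> [|k IH] le_kK; first by rewrite !addn0.
have IHk := IH (ltnW le_kK).
by rewrite !addnS; apply: factor_at_shift IHk (next_letter_det IHk (not_w k le_kK)).
Qed.

Variables (q l : nat).
Hypotheses (occ_q : factor_at X q n = w) (l_gt0 : 0 < l).
Hypothesis no_return : forall t, 0 < t < l -> factor_at X (q + t) n != w.

Lemma first_return_bound : factor_at X (q + l) n = w -> l <= n.+1.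
Proof.
(* The l windows of length n starting at q, ..., q + l - 1 are distinct factors. *)
move=> occ_ql.
have distinct s t : s < t < l -> factor_at X (q + s) n != factor_at X (q + t) n.
  case/andP=> lt_st lt_tl; apply/eqP => e.
  case: (posnP s) => [s0 | s_gt0].
    by have := no_return (t := t) ltac:(lia); rewrite -e s0 addn0 occ_q eqxx.
  have not_w k : k < l - t -> factor_at X (q + s + k) n != w.
    by move=> lt_k; rewrite -addnA no_return //; lia.
  have := factor_at_agree_until e not_w (leqnn (l - t)).
  rewrite -!addnA subnKC ?(ltnW lt_tl) // occ_ql => /eqP.
  by apply/negP; rewrite no_return //; lia.
pose windows := [seq factor_at X (q + t) n | t <- iota 0 l].
have uniq_windows : uniq windows.
  rewrite map_inj_in_uniq ?iota_uniq // => a b; rewrite !mem_iota !add0n => /= lt_a lt_b e.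
  by case: (ltngtP a b) => // lt; [move: (distinct a b) | move: (distinct b a)];
    rewrite lt ?lt_a ?lt_b e eqxx => /(_ isT).
have : size windows <= size (factors X n).
  apply: size_words_in_ge => // _ /mapP[t _ ->].
  by rewrite size_factor_at; split=> //; apply: factor_at_is_factor.
by rewrite size_map size_iota sturmian_size_factors.
Qed.

Lemma return_letters_agree q' : factor_at X q' n = w -> X (q' + n) = X (q + n) ->
  forall t, t < l + n -> X (q' + t) = X (q + t).
Proof.
move=> occ_q' next t lt_t.
case: (ltnP t n) => [lt_tn | le_nt].
  by apply: (elimT (factor_atP X q' q n)) => //; rewrite occ_q occ_q'.
rewrite -(subnK le_nt) !addnA; set u := t - n.
case: (posnP u) => [-> | u_gt0]; first by rewrite !addn0.
have shifted : factor_at X q.+1 n = factor_at X q'.+1 n.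
  by apply: factor_at_shift; rewrite ?occ_q ?occ_q'.
have not_w k : k < l.-1 -> factor_at X (q.+1 + k) n != w.
  by move=> lt_k; rewrite addSnnS no_return //; lia.
have := factor_at_agree_until shifted not_w (k := u.-1) ltac:(lia).
rewrite !addSnnS prednK // => agree.
by apply/esym/(next_letter_det agree); rewrite no_return //; lia.
Qed.

End ReturnTime.

Lemma letter_before_return X w q l : palindrome w ->
  factor_at X q (size w) = w -> factor_at X (q + l) (size w) = w ->
  0 < l -> l <= (size w).+1 -> X (q + l.-1) = X (q + size w).
Proof.
move=> pw occ_q occ_ql l_gt0 le_l; case: (ltnP l.-1 (size w)) => [lt_l | ]; last first.
  by move=> ?; have -> : l.-1 = size w by lia.
rewrite -(nth_factor_at X q lt_l) occ_q {1}pw nth_rev //.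
have lt_l' : size w - l.-1.+1 < size w by lia.
by rewrite -{1}occ_ql nth_factor_at //; congr X; lia.
Qed.

Lemma sturmian_first_return X w q : sturmian X -> factor_at X q (size w) = w ->
  exists l, [/\ 0 < l, factor_at X (q + l) (size w) = w &
                 forall t, 0 < t < l -> factor_at X (q + t) (size w) != w].
Proof.
move=> st occ_q.
have : exists l, (0 < l) && (factor_at X (q + l) (size w) == w).
  have [k lt_k occ_k] := sturmian_recurrent q.+1 st (factor_at_is_factor X q (size w)).
  rewrite size_factor_at occ_q in occ_k.
  by exists (k - q); rewrite subn_gt0 lt_k subnKC ?(ltnW lt_k) // occ_k /=.
case/ex_minnP => l /andP[l_gt0 /eqP occ_ql] l_min; exists l; split=> // t /andP[t_gt0 lt_tl].
by apply: contraTneq lt_tl => occ_t; rewrite -leqNgt l_min // t_gt0 occ_t /=.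
Qed.

Lemma block_periodic_eventually_periodic X q l : 0 < l ->
  (forall k t, t < l -> X (q + k * l + t) = X (q + t)) -> eventually_periodic X.
Proof.
move=> l_gt0 per; exists l, q; split=> // i le_qi.
rewrite -(subnKC le_qi) (divn_eq (i - q) l); set k := _ %/ l; set t := _ %% l.
have lt_tl : t < l by rewrite ltn_mod.
have -> : q + (k * l + t) + l = q + k.+1 * l + t by rewrite mulSnr; lia.
by rewrite addnA !per.
Qed.

Lemma sturmian_pal_extensions_exclusive X w : sturmian X -> palindrome w ->
  is_factor X (true :: rcons w true) -> is_factor X (false :: rcons w false) -> False.
Proof.
move=> st pw f11 f00; set n := size w.
have rs_w : right_special (is_factor X) w.
  by split; [exact: is_factor_cons f11 | exact: is_factor_cons f00].
have [x no_xx'] := sturmian_one_sided_extension st f11 f00.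
have [q occ_q next_q] : exists2 q, factor_at X q n = w & X (q + n) = x.
  have /is_factorP[k] : is_factor X (x :: rcons w x) by case: x no_xx' => _.
  rewrite /= size_rcons factor_atS2 => -[_ /rcons_inj[occ next]].
  by exists k.+1; apply/esym.
have [l [l_gt0 occ_ql no_return]] := sturmian_first_return st occ_q.
have le_l := first_return_bound st rs_w occ_q l_gt0 no_return occ_ql.
have agree k : factor_at X (q + k) n = w -> X (q + k + n) = x ->
    forall t, t < l + n -> X (q + k + t) = X (q + t).
  move=> occ next; apply: (return_letters_agree st rs_w occ_q l_gt0 no_return occ).
  by rewrite next next_q.
(* Each return of w after x w x is preceded by x (w is a palindrome and l <= n + 1),
   hence again followed by x: X is periodic with period l from q on. *)
have occurs k : factor_at X (q + k * l) n = w /\ X (q + k * l + n) = x.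
  elim: k => [|k [occ next]]; first by rewrite mul0n addn0.
  have occ' : factor_at X (q + k * l + l) n = w.
    rewrite -occ_ql; apply/eqP/factor_atP => m lt_m.
    by rewrite -[q + k * l + l + m]addnA -[q + l + m]addnA agree //; lia.
  have before := letter_before_return pw occ occ' l_gt0 le_l.
  rewrite mulSnr addnA; split=> //; apply: NNPP => ne; apply: no_xx'.
  have next' : X (q + k * l + l + n) = ~~ x by case: (x) ne; case: (X _).
  have := factor_at_is_factor X (q + k * l + l.-1) n.+2.
  by rewrite factor_atS2 -addnS prednK // occ' before next next'.
case: st => aper _; apply/aper/(block_periodic_eventually_periodic (q := q) l_gt0) => k t lt_tl.
by case: (occurs k) => occ next; apply: agree => //; lia.
Qed.

Definition weight (u : seq bool) : nat := count id u.

Lemma weight_cons b u : weight (b :: u) = b + weight u.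
Proof. by []. Qed.

Lemma weight_rcons u b : weight (rcons u b) = weight u + b.
Proof. by rewrite /weight -cats1 count_cat /= addn0. Qed.

Lemma weight_cat u v : weight (u ++ v) = weight u + weight v.
Proof. exact: count_cat. Qed.

Lemma weight_rev u : weight (rev u) = weight u.
Proof. exact: count_rev. Qed.

Lemma first_difference (T : eqType) (u v : seq T) : size u = size v -> u <> v ->
  exists z c d s t, [/\ c != d, u = z ++ c :: s, v = z ++ d :: t & size s = size t].
Proof.
elim: u v => [|x u IH] [|y v] //= [suv] ne.
case: (eqVneq x y) => [exy | nxy]; last by exists [::], x, y, u, v.
have [|z [c [d [s [t [cd -> -> st]]]]]] := IH v suv; first by move=> e; apply: ne; rewrite exy e.
by exists (x :: z), c, d, s, t; rewrite exy.
Qed.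

Section Balance.

Variable L : seq bool -> Prop.
Hypothesis L_infix : forall p m s, L (p ++ m ++ s) -> L m.

Lemma L_infix_eq w p m s : w = p ++ m ++ s -> L w -> L m.
Proof. by move=> ->; apply: L_infix. Qed.

Definition unbalanced u v := [/\ size u = size v, L u, L v & weight v + 2 <= weight u].

Definition minimal_unbalanced u v :=
  unbalanced u v /\ forall u' v', size u' < size u -> ~ unbalanced u' v'.

Lemma minimal_unbalanced_ends u v : minimal_unbalanced u v ->
  exists z z', [/\ u = true :: rcons z true, v = false :: rcons z' false & weight z = weight z'].
Proof.
case=> -[suv Lu Lv wuv] min.
case: u suv Lu wuv min => [|x u1] suv Lu wuv min; first by move: wuv; rewrite addn2.
case: v suv Lv wuv => [|y v1] // [s1] Lv wuv.
have Lu1 : L u1 by apply: (L_infix_eq (p := [:: x]) (s := [::])) Lu; rewrite cats0.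
have Lv1 : L v1 by apply: (L_infix_eq (p := [:: y]) (s := [::])) Lv; rewrite cats0.
have {}wuv : [/\ x = true, y = false & weight u1 = weight v1 + 1].
  have : ~ weight v1 + 2 <= weight u1 by move=> w1; apply: (min u1 v1).
  by move: wuv; rewrite !weight_cons; case: (x); case: (y) => /= h1 h2; try split=> //; lia.
case: wuv => ex ey wu1; subst x y; clear Lu1 Lv1.
case/lastP: u1 s1 Lu min wu1 => [|z x'] s1 Lu min wu1; first by move: wu1; rewrite addn1.
case/lastP: v1 s1 Lv wu1 => [|z' y'] s1 Lv wu1; first by move: s1; rewrite size_rcons.
move: s1 wu1; rewrite !size_rcons !weight_rcons => -[s1] wu1.
have : ~ weight z' + 2 <= weight z + 1.
  move=> w1; apply: (min (true :: z) (false :: z')); first by rewrite /= size_rcons.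
  split; rewrite ?weight_cons ?[true + _]addnC //=; [by rewrite s1 | |].
    by apply: (L_infix_eq (p := [::]) (s := [:: x'])) Lu; rewrite /= -cats1.
  by apply: (L_infix_eq (p := [::]) (s := [:: y'])) Lv; rewrite /= -cats1.
move=> no_unbal; exists z, z'; move: wu1 no_unbal.
by case: (x'); case: (y') => /= h1 h2; try split=> //; lia.
Qed.

Lemma unbalanced_ends a b : size a = size b -> weight a = weight b ->
  L (true :: rcons a true) -> L (false :: rcons b false) ->
  unbalanced (true :: rcons a true) (false :: rcons b false).
Proof.
move=> sab wab La Lb; split=> //; first by rewrite /= !size_rcons sab.
by rewrite !weight_cons !weight_rcons wab; lia.
Qed.

Lemma minimal_unbalanced_core u v : minimal_unbalanced u v ->
  exists z, [/\ palindrome z, L (true :: rcons z true) & L (false :: rcons z false)].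
Proof.
move=> uv; have [z [z' [eu ev wz]]] := minimal_unbalanced_ends uv.
case: uv => -[suv Lu Lv _]; rewrite eu => min; subst u v.
move: suv; rewrite /= !size_rcons => -[szz].
have ez : z = z'.
  apply: NNPP => /(first_difference szz) [p [c [d [s [t [cd ez ez' st]]]]]].
  subst z z'; clear szz; case: c d cd wz Lu Lv min => -[] // _ wz Lu Lv min.
    apply: (min (true :: rcons p true) (false :: rcons p false)).
      by rewrite /= !size_rcons size_cat /=; lia.
    apply: unbalanced_ends => //.
      by apply: (L_infix_eq (p := [::]) (s := rcons s true)) Lu; rewrite /= rcons_cat cat_rcons.
    by apply: (L_infix_eq (p := [::]) (s := rcons t false)) Lv; rewrite /= rcons_cat cat_rcons.
  apply: (min (rcons s true) (rcons t false)); first by rewrite /= !size_rcons size_cat /=; lia.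
  split; rewrite ?size_rcons ?st //.
  - apply: (L_infix_eq (p := true :: rcons p false) (s := [::])) Lu.
    by rewrite /= rcons_cat cat_rcons cats0.
  - apply: (L_infix_eq (p := false :: rcons p true) (s := [::])) Lv.
    by rewrite /= rcons_cat cat_rcons cats0.
  - by move: wz; rewrite !weight_rcons !weight_cat !weight_cons; lia.
subst z'; exists z; split=> //; apply: NNPP.
move=> /(first_difference (esym (size_rev z))) [p [c [d [s [t [cd ez ezr st]]]]]].
have ez' : z = rev t ++ d :: rev p by rewrite -[z]revK ezr rev_cat rev_cons cat_rcons.
case: c d cd ez ez' {ezr} Lu Lv min => -[] // _ ez ez' Lu Lv min.
  apply: (min (true :: rcons p true) (false :: rcons (rev p) false)).
    by rewrite /= !size_rcons ez size_cat /=; lia.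
  apply: unbalanced_ends; rewrite ?size_rev ?weight_rev //.
    by apply: (L_infix_eq (p := [::]) (s := rcons s true)) Lu; rewrite ez /= rcons_cat cat_rcons.
  by apply: (L_infix_eq (p := false :: rev t) (s := [::])) Lv; rewrite ez' /= rcons_cat cats0.
apply: (min (true :: rcons (rev p) true) (false :: rcons p false)).
  by rewrite /= !size_rcons ez' size_cat /= !size_rev; lia.
apply: unbalanced_ends; rewrite ?size_rev ?weight_rev //.
  by apply: (L_infix_eq (p := true :: rev t) (s := [::])) Lu; rewrite ez' /= rcons_cat cats0.
by apply: (L_infix_eq (p := [::]) (s := rcons s false)) Lv; rewrite ez /= rcons_cat cat_rcons.
Qed.

Lemma unbalanced_palindrome u v : unbalanced u v ->
  exists z, [/\ palindrome z, L (true :: rcons z true) & L (false :: rcons z false)].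
Proof.
move: {2}(size u) (erefl (size u)) => n; elim/ltn_ind: n u v => n IH u v su uv.
case: (classic (exists u' v', size u' < n /\ unbalanced u' v')) => [[u' [v' [lt uv']]] | none].
  exact: (IH _ lt u' v' erefl uv').
apply: (@minimal_unbalanced_core u v); split=> // u' v' lt uv'.
by apply: none; exists u', v'; rewrite -su.
Qed.

End Balance.

Definition rev_closure (X : word) (v : seq bool) : Prop := is_factor X v \/ is_factor X (rev v).

Lemma rev_closure_infix X p m s : rev_closure X (p ++ m ++ s) -> rev_closure X m.
Proof.
case=> [/is_factor_cat[_ /is_factor_cat[]] | ]; first by left.
by rewrite !rev_cat => /is_factor_cat[/is_factor_cat[_]]; right.
Qed.

Lemma rev_closure_prefix X v b : rev_closure X (rcons v b) -> rev_closure X v.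
Proof. by rewrite -cats1 -[v]cat0s -catA => /rev_closure_infix. Qed.

Lemma pal_cons_rcons b w : palindrome w -> palindrome (b :: rcons w b).
Proof. by move=> pw; rewrite /palindrome rev_cons rev_rcons -pw. Qed.

Lemma rev_closure_pal X w : palindrome w -> rev_closure X w -> is_factor X w.
Proof. by move=> pw [] //; rewrite -pw. Qed.

Lemma sturmian_rev_closure_balanced X u v : sturmian X -> size u = size v ->
  rev_closure X u -> rev_closure X v -> weight v + 2 <= weight u -> False.
Proof.
move=> st suv Lu Lv wuv.
have uv : unbalanced (rev_closure X) u v by [].
have [z [pz L1 L0]] := unbalanced_palindrome (@rev_closure_infix X) uv.
apply: (sturmian_pal_extensions_exclusive st pz);
  [apply: rev_closure_pal L1 | apply: rev_closure_pal L0]; exact: pal_cons_rcons.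
Qed.

Lemma sturmian_rev_closure_right_special_uniq X u v : sturmian X -> size u = size v ->
  right_special (rev_closure X) u -> right_special (rev_closure X) v -> u = v.
Proof.
move=> st; elim: u v => [|c u IH] [|d v] //= [suv] [Lc1 Lc0] [Ld1 Ld0].
have suffix_rs b w : right_special (rev_closure X) (b :: w) -> right_special (rev_closure X) w.
  by case=> L1 L0; split; apply: (@rev_closure_infix X [:: b] _ [::]); rewrite cats0.
have euv := IH v suv (suffix_rs _ _ (conj Lc1 Lc0)) (suffix_rs _ _ (conj Ld1 Ld0)); subst v.
case: (eqVneq c d) => [-> // | cd]; exfalso.
apply: (@sturmian_rev_closure_balanced X (true :: rcons u true) (false :: rcons u false)) => //.
- by rewrite /= !size_rcons.
- by case: c d cd Lc1 Ld1 {Lc0 Ld0} => -[].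
- by case: c d cd Lc0 Ld0 {Lc1 Ld1} => -[].
- by rewrite !weight_cons !weight_rcons; lia.
Qed.

Lemma sturmian_size_rev_closure X n : sturmian X -> size (words_in (rev_closure X) n) <= n.+1.
Proof.
move=> st; elim: n => [|n IH].
  apply: (@uniq_leq_size _ _ [:: [::]]); first exact: uniq_words_in.
  by move=> v /mem_words_in[/size0nil -> _]; apply: mem_head.
apply: leq_trans (size_words_inS_le (@rev_closure_prefix X) n) _.
have : count_right_special (rev_closure X) n <= 1.
  apply/(count_right_special_le1P (@rev_closure_prefix X)) => u v su sv.
  by apply: sturmian_rev_closure_right_special_uniq; rewrite ?su.
lia.
Qed.

(* The reversal closure has at most one right special word per length, hence at
   most as many words as the set of factors it contains. *)
Lemma sturmian_is_factor_rev X u : sturmian X -> is_factor X u -> is_factor X (rev u).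
Proof.
move=> st fu; apply: NNPP => nfr.
have : size (factors X (size u) ++ [:: rev u]) <= size (words_in (rev_closure X) (size u)).
  apply: size_words_in_ge => [|v].
    rewrite cat_uniq uniq_words_in /= andbT orbF.
    by apply/negP => /mem_words_in[_ /nfr].
  rewrite mem_cat inE => /orP[/mem_words_in[sv fv] | /eqP ->]; first by split=> //; left.
  by rewrite size_rev; split=> //; right; rewrite revK.
by rewrite size_cat sturmian_size_factors //= addn1 ltnNge sturmian_size_rev_closure.
Qed.

Definition pal_on (X : word) (a b : nat) : Prop := forall t, a <= t <= b -> X t = X (a + b - t).

Lemma pal_on_widen X a b : pal_on X a b -> 0 < a -> X a.-1 = X b.+1 -> pal_on X a.-1 b.+1.
Proof.
move=> pab a_gt0 e t /andP[le_t le_t'].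
case: (ltnP t a) => [lt_ta | le_at].
  have -> : t = a.-1 by lia.
  by rewrite e; congr X; lia.
case: (ltnP b t) => [lt_bt | le_tb].
  have -> : t = b.+1 by lia.
  by rewrite -e; congr X; lia.
by rewrite pab ?le_at //; congr X; lia.
Qed.

Lemma subw_factor_at X a b : subw X a b = factor_at X a (b.+1 - a).
Proof. by rewrite /subw /factor_at /mkseq -{1}[a]addn0 iotaDl -map_comp. Qed.

Lemma palindrome_subw X a b : a <= b -> pal_on X a b -> palindrome (subw X a b).
Proof.
move=> le_ab pab; rewrite subw_factor_at /palindrome.
apply: (@eq_from_nth _ false) => [|t]; rewrite ?size_rev // size_factor_at => lt_t.
rewrite nth_rev size_factor_at // !nth_factor_at; try lia.
by rewrite pab; [congr X | ]; lia.
Qed.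

Definition nested_in_maximal_pal (X : word) (P : seq bool) : Prop :=
  exists i' i j j' : nat,
    [/\ i' < i, i <= j, j < j' & 1 <= i'] /\
    [/\ i + j = i' + j', subw X i j = P, X i.-1 = X j.+1,
        palindrome (subw X i' j') & X i'.-1 != X j'.+1].

Definition extendable_occurrence (X : word) (P : seq bool) (i : nat) : Prop :=
  [/\ 0 < i, factor_at X i (size P) = P & X i.-1 = X (i + size P)].

Section NoNestedOccurrence.

Variables (X : word) (P : seq bool).
Hypotheses (pP : palindrome P) (P_gt0 : 0 < size P) (not_nested : ~ nested_in_maximal_pal X P).
Local Notation m := (size P).

(* Widen the palindrome centred on the occurrence one letter at a time: the first
   failure would be a maximal palindrome strictly containing it. *)
Lemma extendable_pal_prefix i : extendable_occurrence X P i -> pal_on X 0 (i + (i + m.-1)).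
Proof.
case=> i_gt0 occ_i ext_i; set j := i + m.-1.
have occ_ij : subw X i j = P by rewrite subw_factor_at -occ_i; congr factor_at; lia.
have pal_ij : pal_on X i j.
  have nthP k : k < m -> nth false P k = X (i + k).
    by move=> lt_k; rewrite -{1}occ_i nth_factor_at.
  move=> t /andP[le_it le_tj]; rewrite -[t](subnKC le_it) -nthP; last lia.
  by rewrite {1}pP nth_rev ?nthP; [congr X | | ]; lia.
have widen r : r <= i -> pal_on X (i - r) (j + r).
  elim: r => [|r IH] le_ri; first by rewrite subn0 addn0.
  have -> : i - r.+1 = (i - r).-1 by lia.
  rewrite addnS; apply: pal_on_widen (IH (ltnW le_ri)) _ _; first lia.
  case: (posnP r) => [-> | r_gt0]; first by rewrite subn0 addn0 ext_i; congr X; lia.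
  apply: NNPP => /eqP ne; apply: not_nested.
  exists (i - r), i, j, (j + r); split; split => //; try lia.
  - by rewrite ext_i; congr X; lia.
  - by apply: palindrome_subw (IH (ltnW le_ri)); lia.
by have := widen i (leqnn i); rewrite subnn addnC.
Qed.

Lemma extendable_mirror i s : extendable_occurrence X P i ->
  pal_on X 0 s -> i + (i + m.-1) <= s -> extendable_occurrence X P (s - (i + m.-1)).
Proof.
case=> i_gt0 occ_i ext_i pal le_s.
have nthP k : k < m -> nth false P k = X (i + k).
  by move=> lt_k; rewrite -{1}occ_i nth_factor_at.
split; first lia.
  apply: (@eq_from_nth _ false) => [|k]; rewrite size_factor_at // => lt_k.
  rewrite nth_factor_at // pal; last lia.
  have -> : 0 + s - (s - (i + m.-1) + k) = i + (m.-1 - k) by lia.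
  rewrite -nthP; last lia.
  by rewrite [in RHS]pP nth_rev //; congr nth; lia.
rewrite (pal (s - _).-1) ?(pal (s - _ + m)); try lia.
have -> : 0 + s - (s - (i + m.-1)).-1 = i + m by lia.
have -> : 0 + s - (s - (i + m.-1) + m) = i.-1 by lia.
by rewrite ext_i.
Qed.

Lemma extendable_occurrence_uniq i1 i2 : aperiodic X ->
  extendable_occurrence X P i1 -> extendable_occurrence X P i2 -> i1 = i2.
Proof.
move=> aper; wlog lt_i12 : i1 i2 / i1 < i2.
  by move=> H e1 e2; case: (ltngtP i1 i2) => [lt | lt | //]; [apply: H | apply/esym/H].
(* Reflecting b through the palindromic prefix centred on b + d gives an
   occurrence at b + 2d; two such prefixes then make 2d a period. *)
move=> e1 e2; exfalso; set d := i2 - i1.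
have far k : exists b,
    [/\ k <= b, extendable_occurrence X P b & extendable_occurrence X P (b + d)].
  elim: k => [|k [b [le_kb eb ebd]]]; first by exists i1; rewrite /d subnKC // ltnW.
  exists (b + d); split=> //; first by rewrite /d; lia.
  have := extendable_mirror eb (extendable_pal_prefix ebd) ltac:(lia).
  by have -> : b + d + (b + d + m.-1) - (b + m.-1) = b + d + d by lia.
apply: aper; exists (d + d), 0; split=> [|k _]; first by rewrite /d; lia.
have [b [le_kb eb ebd]] := far k.
rewrite (extendable_pal_prefix ebd (t := k + (d + d))); last lia.
rewrite (extendable_pal_prefix eb (t := k)); last lia.
by congr X; lia.
Qed.

End NoNestedOccurrence.

Lemma extendable_occurrence_cons_rcons X P c k :
  factor_at X k (size P).+2 = c :: rcons P c -> extendable_occurrence X P k.+1.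
Proof. by rewrite factor_atS2 => -[e1 /rcons_inj[e2 e3]]; split; rewrite //= e1 e3. Qed.

Lemma sturmian_maximal_pal_right_special X P : sturmian X -> palindrome P ->
  maximal_pal X P -> right_special (is_factor X) P.
Proof.
move=> st pP [l [l' [ll' f]]].
have f' : is_factor X (l' :: rcons P l).
  by have := sturmian_is_factor_rev st f; rewrite rev_cons rev_rcons -pP.
by apply: (right_specialI ll'); [exact: is_factor_cons f' | exact: is_factor_cons f].
Qed.

Lemma sturmian_right_special_extension X w : sturmian X ->
  right_special (is_factor X) w -> exists c, is_factor X (c :: rcons w c).
Proof.
move=> st rs_w; have [[|c v] [//= [sv] [f1 f0]]] := sturmian_right_special_exists (size w).+1 st.
have rs_v : right_special (is_factor X) v by split; apply: is_factor_cons; [exact: f1 | exact: f0].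
rewrite (sturmian_right_special_uniq st sv rs_v rs_w) in f1 f0.
by exists c; case: c f1 f0.
Qed.

Theorem lemma6 (X : word) (P : seq bool) :
  sturmian X -> palindrome P -> maximal_pal X P -> 0 < size P ->
  exists i' i j j' : nat,
    [/\ i' < i, i <= j, j < j' & 1 <= i'] /\
    [/\ i + j = i' + j', subw X i j = P, X i.-1 = X j.+1,
        palindrome (subw X i' j') & X i'.-1 != X j'.+1].
Proof.
move=> st pP maxP P_gt0; change (nested_in_maximal_pal X P); apply: NNPP => not_nested.
have [c f] := sturmian_right_special_extension st (sturmian_maximal_pal_right_special st pP maxP).
have [k1 _ occ1] := sturmian_recurrent 0 st f.
have [k2 lt_k12 occ2] := sturmian_recurrent k1.+1 st f.
rewrite /= size_rcons in occ1 occ2.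
have := extendable_occurrence_uniq pP P_gt0 not_nested st.1
  (extendable_occurrence_cons_rcons occ1) (extendable_occurrence_cons_rcons occ2).
by move=> [e]; rewrite e ltnn in lt_k12.
Qed.
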